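(* Let $\mathcal{X}$ be a finite set, $a:2^{\mathcal{X}}\to\mathbb{R}$ a monotone set function, $n\ge1$ and $l\ge1$ integers, and $\{\pi_\theta\}_{\theta\in\Theta}$ an expressive set-conditioned policy family. If $\theta^*\in\Theta$ is a greedy policy, i.e. $\mathcal{J}(\theta^*,\theta^* )\ge\mathcal{J}(\theta,\theta^* )$ for all $\theta\in\Theta$, then the set produced by $\mathrm{GS}(a,\pi_{\theta^*},n,l)$ is an exact greedy solution with probability $1$.
   Context: Marginal gain: $\Delta_a(x\mid B):=a(B\cup\{x\})-a(B)$. $a$ is monotone if $\Delta_a(x\mid B)\ge0$ for all $B\subseteq\mathcal X$, $x\in\mathcal X\setminus B$. A set-conditioned policy family assigns to each $\theta\in\Theta$ and each subset $B\subseteq\mathcal X$ a probability distribution $\pi_\theta(\cdot\mid B)$ on $\mathcal X$; it is expressive if for every assignment $B\mapsto p_B$ of probability distributions on $\mathcal X$ to subsets there is $\theta\in\Theta$ with $\pi_\theta(\cdot\mid B)=p_B$ for all $B$. Greedy sampling $\mathrm{GS}(a,\pi_\theta,k,l)$ is the random $k$-step procedure: $B_0=\emptyset$; for $i=0,\dots,k-1$, draw $l$ i.i.d. candidates $x_{i,0},\dots,x_{i,l-1}\sim\pi_\theta(\cdot\mid B_i)$, let $x_i$ be a candidate maximizing $\Delta_a(x_{i,j}\mid B_i)$ over $j$ (ties broken uniformly at random), and set $B_{i+1}=B_i\cup\{x_i\}$; output $B_k$. Expected gain: $\mathcal J(\theta,\theta'):=\frac1n\sum_{k=0}^{n-1}\mathbb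 E_{B\sim\mathrm{GS}(a,\pi_{\theta'},k,1)}\big[\mathbb E_{x\sim\pi_\theta(\cdot\mid B)}[\Delta_a(x\mid B)]\big]$. A set $B_n\subseteq\mathcal X$ is an exact greedy solution if there exist $x_0,\dots,x_{n-1}\in\mathcal X$ with $B_n=\{x_0,\dots,x_{n-1}\}$ and $x_t\in\arg\max_{x'\in\mathcal X}\Delta_a(x'\mid\{x_0,\dots,x_{t-1}\})$ for every $0\le t\le n-1$ (with $\{x_0,\dots,x_{-1}\}=\emptyset$). *)

From HB Require Import structures.
From mathcomp Require Import all_boot all_order all_algebra.
Set Implicit Arguments. Unset Strict Implicit. Unset Printing Implicit Defensive.
Import Order.TTheory GRing.Theory Num.Theory.
Local Open Scope ring_scope.

Section GreedySampling.
Variables (R : realFieldType) (X : finType).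

Definition is_dist (p : X -> R) : Prop :=
  (forall x, 0 <= p x) /\ \sum_(x : X) p x = 1.

Definition gain (a : {set X} -> R) (x : X) (B : {set X}) : R :=
  a (x |: B) - a B.

Definition monotone (a : {set X} -> R) : Prop :=
  forall (B : {set X}) (x : X), x \notin B -> 0 <= gain a x B.

Definition policy_family (Theta : Type) (pi : Theta -> {set X} -> X -> R) : Prop :=
  forall th B, is_dist (pi th B).

Definition expressive (Theta : Type) (pi : Theta -> {set X} -> X -> R) : Prop :=
  forall p : {set X} -> X -> R, (forall B, is_dist (p B)) ->
    exists th, forall B x, pi th B x = p B x.

(* One step of greedy sampling from B with l i.i.d. candidates drawn from p:
   probability that the selected candidate equals y. *)
Definition argmax_idx (a : {set X} -> R) (l : nat) (B : {set X})
    (t : {ffun 'I_l -> X}) : {set 'I_l} :=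
  [set j | [forall k, gain a (t k) B <= gain a (t j) B]].

Definition select_prob (a : {set X} -> R) (l : nat) (B : {set X})
    (t : {ffun 'I_l -> X}) (y : X) : R :=
  #|[set j in argmax_idx a B t | t j == y]|%:R / #|argmax_idx a B t|%:R.

Definition step_prob (a : {set X} -> R) (p : X -> R) (l : nat) (B : {set X}) (y : X) : R :=
  \sum_(t : {ffun 'I_l -> X}) (\prod_(j < l) p (t j)) * select_prob a B t y.

Fixpoint GS_dist (a : {set X} -> R) (pol : {set X} -> X -> R) (k l : nat)
    (B' : {set X}) : R :=
  match k with
  | 0 => if B' == set0 then 1 else 0
  | k'.+1 => \sum_(B : {set X}) GS_dist a pol k' l B *
               \sum_(y : X | y |: B == B') step_prob a (pol B) l B y
  end.

Definition J (a : {set X} -> R) (Theta : Type) (pi : Theta -> {set X} -> X -> R)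
    (n : nat) (th th' : Theta) : R :=
  n%:R^-1 * \sum_(k < n) \sum_(B : {set X})
     GS_dist a (pi th') k 1 B * \sum_(x : X) pi th B x * gain a x B.

Definition prefix_set (n : nat) (xs : 'I_n -> X) (t : nat) : {set X} :=
  [set xs j | j : 'I_n & (j < t)%N].

Definition exact_greedy (a : {set X} -> R) (n : nat) (Bn : {set X}) : Prop :=
  exists xs : 'I_n -> X,
    Bn = [set xs j | j : 'I_n] /\
    forall t : 'I_n, forall x' : X,
      gain a x' (prefix_set xs t) <= gain a (xs t) (prefix_set xs t).

End GreedySampling.

(* If theta_star maximizes the expected gain J(., theta_star), then at every
   set B reached with positive probability by one-candidate sampling before
   step n, the policy of theta_star at B only charges maximizers of the
   marginal gain: otherwise, by expressivity, moving the policy at B alone to a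
   point mass on a maximizer would strictly increase J.  Sampling with l
   candidates only ever selects one of the candidates, so by induction on the
   number of steps every set it reaches is also reached by one-candidate
   sampling and is built by exact greedy choices. *)
From mathcomp Require Import all_boot all_order all_algebra.
Set Implicit Arguments. Unset Strict Implicit. Unset Printing Implicit Defensive.
Import Order.TTheory GRing.Theory Num.Theory.
Local Open Scope ring_scope.

Lemma ltr_sum_at (R : numDomainType) (I : finType) (F G : I -> R) (i0 : I) :
  (forall i, F i <= G i) -> F i0 < G i0 -> \sum_i F i < \sum_i G i.
Proof.
move=> leFG ltFG; rewrite (bigD1 i0) // [ltRHS](bigD1 i0) //=.
by apply: ltr_leD => //; apply: ler_sum.
Qed.

Lemma sumr_neq0_exists (V : nmodType) (I : finType) (P : pred I) (F : I -> V) :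
  \sum_(i | P i) F i != 0 -> exists2 i, P i & F i != 0.
Proof.
move=> sum_neq0; have /existsP[i /andP[Pi Fi]] : [exists i, P i && (F i != 0)].
  apply: contraNT sum_neq0 => /existsPn none; apply/eqP/big1 => i Pi.
  by apply/eqP; move: (none i); rewrite Pi negbK.
by exists i.
Qed.

Section GreedySampling.
Variables (R : realFieldType) (X : finType) (a : {set X} -> R).

Definition greedy_choice (B : {set X}) (x : X) : Prop :=
  forall x', gain a x' B <= gain a x B.

Definition greedy_seq (s : seq X) : Prop :=
  forall i d, (i < size s)%N -> greedy_choice [set z in take i s] (nth d s i).

Definition expected_gain (p : X -> R) (B : {set X}) : R :=
  \sum_x p x * gain a x B.

Lemma exists_greedy_choice (B : {set X}) (x0 : X) : exists m, greedy_choice B m.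
Proof.
exists [arg max_(m > x0) gain a m B]%O.
by case: arg_maxP => // m _ max_m x'; apply: max_m.
Qed.

Lemma greedy_seq_rcons (s : seq X) (y : X) :
  greedy_seq s -> greedy_choice [set z in s] y -> greedy_seq (rcons s y).
Proof.
move=> greedy_s greedy_y i d; rewrite size_rcons ltnS leq_eqVlt -cats1.
case/orP=> [/eqP ->|lt_is]; first by rewrite take_size_cat // nth_cat ltnn subnn.
by rewrite takel_cat ?(ltnW lt_is) // nth_cat lt_is; apply: greedy_s.
Qed.

Lemma prefix_set_nth (d : X) (s : seq X) (t : nat) :
  (t <= size s)%N ->
  prefix_set (fun j : 'I_(size s) => nth d s j) t = [set z in take t s].
Proof.
move=> le_ts; have size_take : size (take t s) = t by rewrite size_takel.
apply/setP => z; rewrite inE; apply/imsetP/idP => [[j]|z_take].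
  by rewrite inE => lt_jt ->; rewrite -(nth_take d lt_jt) mem_nth ?size_take.
have lt_zt : (index z (take t s) < t)%N by rewrite -{2}size_take index_mem.
exists (Ordinal (leq_trans lt_zt le_ts)); first by rewrite inE.
by rewrite /= -(nth_take d lt_zt) nth_index.
Qed.

Lemma exact_greedy_seq (d : X) (s : seq X) :
  greedy_seq s -> exact_greedy a (size s) [set z in s].
Proof.
move=> greedy_s; exists (fun j => nth d s j); split.
  apply/setP => z; rewrite inE.
  apply/idP/imsetP => [z_s|[j _ ->]]; last exact: mem_nth.
  have lt_zs : (index z s < size s)%N by rewrite index_mem.
  by exists (Ordinal lt_zs); rewrite ?nth_index.
by move=> t x'; rewrite prefix_set_nth 1?ltnW //; apply: greedy_s.
Qed.

Lemma select_prob_ge0 l B (t : {ffun 'I_l -> X}) y : 0 <= select_prob a B t y.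
Proof. by rewrite divr_ge0 ?ler0n. Qed.

Lemma step_prob_ge0 (p : X -> R) l B y :
  (forall x, 0 <= p x) -> 0 <= step_prob a p l B y.
Proof.
move=> p_ge0; apply: sumr_ge0 => t _.
by rewrite mulr_ge0 ?select_prob_ge0 ?prodr_ge0.
Qed.

Lemma step_prob_neq0 (p : X -> R) l B y :
  step_prob a p l B y != 0 -> p y != 0.
Proof.
apply: contraNneq => py0; apply/eqP/big1 => t _.
have [/existsP[j /eqP tj]|/existsPn not_y] := boolP [exists j, t j == y].
  by rewrite (bigD1 j) //= tj py0 !mul0r.
rewrite /select_prob (_ : [set j in _ | t j == y] = set0) ?cards0 ?mul0r ?mulr0 //.
by apply/setP => j; rewrite !inE (negbTE (not_y j)) andbF.
Qed.

Lemma step_prob1 (p : X -> R) B y : step_prob a p 1 B y = p y.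
Proof.
pose ty : {ffun 'I_1 -> X} := [ffun=> y].
have argmax_ty : argmax_idx a B ty = [set: 'I_1].
  by apply/setP => j; rewrite !inE; apply/forallP => k; rewrite !ffunE.
rewrite /step_prob (bigD1 ty) //= [X in _ + X]big1 ?addr0 => [|t neq_t]; last first.
  rewrite /select_prob (_ : [set j in _ | t j == y] = set0) ?cards0 ?mul0r ?mulr0 //.
  apply/setP => j; rewrite !inE ord1; apply: contraNF neq_t => /andP[_ /eqP t0].
  by apply/eqP/ffunP => k; rewrite ord1 t0 ffunE.
rewrite big_ord1 ffunE /select_prob argmax_ty.
rewrite (_ : [set j in [set: 'I_1] | ty j == y] = [set: 'I_1]); last first.
  by apply/setP => j; rewrite !inE ffunE eqxx.
by rewrite mulfV ?mulr1 // cardsT card_ord oner_neq0.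
Qed.

Section Distribution.
Variables (pol : {set X} -> X -> R) (l : nat).
Hypothesis pol_ge0 : forall B x, 0 <= pol B x.

Lemma GS_dist_ge0 k B : 0 <= GS_dist a pol k l B.
Proof.
elim: k B => [|k IH] B /=; first by case: (B == set0).
apply: sumr_ge0 => B0 _; rewrite mulr_ge0 //.
by apply: sumr_ge0 => y _; apply: step_prob_ge0.
Qed.

Lemma GS_dist_step_gt0 k B y :
  0 < GS_dist a pol k l B -> 0 < step_prob a (pol B) l B y ->
  0 < GS_dist a pol k.+1 l (y |: B).
Proof.
move=> reach_B step_y; rewrite /= (bigD1 B) //=; apply: ltr_wpDr.
  apply: sumr_ge0 => B0 _; rewrite mulr_ge0 ?GS_dist_ge0 //.
  by apply: sumr_ge0 => z _; apply: step_prob_ge0.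
rewrite mulr_gt0 // (bigD1 y) ?eqxx //=; apply: ltr_wpDr => //.
by apply: sumr_ge0 => z _; apply: step_prob_ge0.
Qed.

Lemma GS_dist_succ_neq0 k B' :
  GS_dist a pol k.+1 l B' != 0 ->
  exists B y, [/\ B' = y |: B, GS_dist a pol k l B != 0
                & step_prob a (pol B) l B y != 0].
Proof.
move=> /sumr_neq0_exists[B _]; rewrite mulf_eq0 negb_or => /andP[reach_B].
by move=> /sumr_neq0_exists[y /eqP <- step_y]; exists B, y.
Qed.

End Distribution.

Lemma dirac_dist (m : X) : is_dist (fun z => (z == m)%:R : R).
Proof.
split=> [z|]; first exact: ler0n.
by rewrite (bigD1 m) //= eqxx big1 ?addr0 // => z /negbTE ->.
Qed.

Lemma expected_gain_dirac (m : X) B :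
  expected_gain (fun z => (z == m)%:R) B = gain a m B.
Proof.
rewrite /expected_gain (bigD1 m) //= eqxx mul1r big1 ?addr0 // => z /negbTE ->.
exact: mul0r.
Qed.

Lemma expected_gain_lt_greedy (p : X -> R) B x m :
  is_dist p -> greedy_choice B m -> p x != 0 -> gain a x B < gain a m B ->
  expected_gain p B < gain a m B.
Proof.
move=> [p_ge0 p_sum1] greedy_m px lt_xm.
rewrite -subr_gt0 -[gain a m B]mul1r -p_sum1 mulr_suml -sumrB (bigD1 x) //=.
apply: ltr_wpDr.
  by apply: sumr_ge0 => z _; rewrite -mulrBr mulr_ge0 ?subr_ge0.
by rewrite -mulrBr mulr_gt0 ?subr_gt0 // lt0r px p_ge0.
Qed.

Lemma J_lt (Theta : Type) (pi : Theta -> {set X} -> X -> R) (n : nat)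
    (th th' ths : Theta) k B :
  policy_family pi -> (k < n)%N -> GS_dist a (pi ths) k 1 B != 0 ->
  (forall B', expected_gain (pi th B') B' <= expected_gain (pi th' B') B') ->
  expected_gain (pi th B) B < expected_gain (pi th' B) B ->
  J a pi n th ths < J a pi n th' ths.
Proof.
move=> pi_dist lt_kn reach_B le_gain lt_gain.
have GS_ge0 k' B' : 0 <= GS_dist a (pi ths) k' 1 B'.
  by apply: GS_dist_ge0 => B0 x; apply: (pi_dist _ _).1.
rewrite /J ltr_pM2l ?invr_gt0 ?ltr0n ?(leq_ltn_trans (leq0n k) lt_kn) //.
apply: (@ltr_sum_at R _ _ _ (Ordinal lt_kn)) => [k'|/=].
  by apply: ler_sum => B' _; apply: ler_wpM2l; [apply: GS_ge0 | apply: le_gain].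
apply: (@ltr_sum_at R _ _ _ B) => [B'|].
  by apply: ler_wpM2l; [apply: GS_ge0 | apply: le_gain].
by rewrite ltr_pM2l ?lt0r ?reach_B ?GS_ge0.
Qed.

End GreedySampling.

Section GreedyPolicy.
Variables (R : realFieldType) (X : finType) (a : {set X} -> R).
Variables (Theta : Type) (pi : Theta -> {set X} -> X -> R) (n : nat) (ths : Theta).
Hypothesis pi_dist : policy_family pi.
Hypothesis pi_expressive : expressive pi.
Hypothesis ths_greedy : forall th, J a pi n th ths <= J a pi n ths ths.

Let pi_ge0 B x : 0 <= pi ths B x := (pi_dist ths B).1 x.

Lemma greedy_policy_support k B x :
  (k < n)%N -> GS_dist a (pi ths) k 1 B != 0 -> pi ths B x != 0 ->
  greedy_choice a B x.
Proof.
move=> lt_kn reach_B px x'; rewrite leNgt; apply/negP => lt_xx'.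
have [m greedy_m] := exists_greedy_choice a B x.
pose p B' := if B' == B then (fun z => (z == m)%:R) else pi ths B'.
have p_dist B' : is_dist (p B').
  by rewrite /p; case: eqP => _; [apply: dirac_dist | apply: pi_dist].
have [th pi_th] := pi_expressive p_dist.
have gain_th B' : expected_gain a (pi th B') B' = expected_gain a (p B') B'.
  by apply: eq_bigr => z _; rewrite pi_th.
have lt_th : expected_gain a (pi ths B) B < expected_gain a (pi th B) B.
  rewrite gain_th /p eqxx expected_gain_dirac.
  exact: expected_gain_lt_greedy (pi_dist ths B) greedy_m px
           (lt_le_trans lt_xx' (greedy_m x')).
have := ths_greedy th; apply/negP; rewrite -ltNge.
apply: (J_lt pi_dist lt_kn reach_B _ lt_th) => B'.
by case: (eqVneq B' B) => [->|neq]; [exact: ltW | rewrite gain_th /p (negbTE neq)].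
Qed.

Lemma GS_dist_support l k B :
  (k <= n)%N -> GS_dist a (pi ths) k l B != 0 ->
  GS_dist a (pi ths) k 1 B != 0 /\
  exists s, [/\ size s = k, B = [set z in s] & greedy_seq a s].
Proof.
elim: k B => [|k IH] B' le_kn /=.
  have [-> _|_] := eqVneq B' set0; last by rewrite eqxx.
  split; first exact: oner_neq0.
  by exists [::]; split=> //; apply/setP => z; rewrite !inE.
move=> /GS_dist_succ_neq0[B [y [-> reach_B step_y]]].
have py := step_prob_neq0 step_y.
have [reach1_B [s [size_s def_B greedy_s]]] := IH B (ltnW le_kn) reach_B.
split.
  apply/lt0r_neq0/(GS_dist_step_gt0 pi_ge0).
    by rewrite lt0r reach1_B GS_dist_ge0.
  by rewrite step_prob1 lt0r py pi_ge0.
exists (rcons s y); split; first by rewrite size_rcons size_s.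
  by apply/setP => z; rewrite def_B !inE mem_rcons in_cons.
apply: greedy_seq_rcons => //; rewrite -def_B.
exact: greedy_policy_support le_kn reach1_B py.
Qed.

End GreedyPolicy.

Theorem mainTheorem5 (R : realFieldType) (X : finType) (a : {set X} -> R)
    (n l : nat) (Theta : Type) (pi : Theta -> {set X} -> X -> R) (th_star : Theta) :
  monotone a ->
  (1 <= n)%N -> (1 <= l)%N ->
  policy_family pi ->
  expressive pi ->
  (forall th : Theta, J a pi n th th_star <= J a pi n th_star th_star) ->
  forall B : {set X}, ~ exact_greedy a n B -> GS_dist a (pi th_star) n l B = 0.
Proof.
move=> _ n_gt0 _ pi_dist pi_expressive th_star_greedy B not_greedy.
have [//|reach_B] := eqVneq (GS_dist a (pi th_star) n l B) 0.
have [_ [s [size_s def_B greedy_s]]] :=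
  GS_dist_support pi_dist pi_expressive th_star_greedy (leqnn n) reach_B.
case: s greedy_s size_s def_B => [|d s] greedy_s size_s def_B.
  by rewrite -size_s in n_gt0.
by case: not_greedy; rewrite -size_s def_B; apply: exact_greedy_seq.
Qed.
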